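(* In the setting of the context, let $\omega\in\mathcal{C}$ and put $\kappa:=\frac{\omega^2}{c-id\omega-\omega^2}$, $\lambda:=\omega^2$. Define $\epsilon_0$ as follows. If $\kappa_\Re=0$, $$\epsilon_0:=\sqrt{\min_{\beta\in W(B)}|\beta\kappa_\Im+\lambda_\Im|^2+\min_{\alpha\in W(A)}|\alpha-\lambda_\Re|^2}.$$ If $\kappa_\Re\neq0$, let $\beta_{\inf}$ and $\beta_{\sup}$ be the values in $\overline{W(B)}$ closest to $-\frac{\kappa_\Im\lambda_\Im-\kappa_\Re(\inf W(A)-\lambda_\Re)}{|\kappa|^2}$ and $-\frac{\kappa_\Im\lambda_\Im-\kappa_\Re(\sup W(A)-\lambda_\Re)}{|\kappa|^2}$, respectively, and let $\mathcal{B}:=\left[\frac{\inf W(A)-\lambda_\Re}{\kappa_\Re},\frac{\sup W(A)-\lambda_\Re}{\kappa_\Re}\right]$. If $\mathcal{B}\cap\overline{W(B)}=\emptyset$ set $\Omega':=\{(\inf W(A),\beta_{\inf}),(\sup W(A),\beta_{\sup})\}$; if $\mathcal{B}\cap\overline{W(B)}\neq\emptyset$ set $\Omega':=\{(\inf W(A),\beta_{\inf}),(\sup W(A),\beta_{\sup}),(\alpha_{op},\beta_{op})\}$, where $\beta_{op}$ is the value in $\mathcal{B}\cap\overline{W(B)}$ closest to $-\lambda_\Im/\kappa_\Im$ (arbitrary in $\mathcal{B}\cap\overline{W(B)}$ if $\kappa_\Im=0$) and $\alpha_{op}:=\beta_{op}\kappa_\Re+\lambda_\Re$; then $$\epsilon_0:=\min_{(\alpha,\beta)\in\Omega'}\sqrt{|\beta\kappa_\Im+\lambda_\Im|^2+|\alpha-\kappa_\Re\beta-\lambda_\Re|^2}.$$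 Then $\omega\in W^\epsilon_\Omega(T)$ if and only if $\epsilon>\epsilon_0$.
   Context: Let $\mathcal{H}$ be a Hilbert space, $A$ a selfadjoint (possibly unbounded) operator in $\mathcal{H}$ and $B$ a nonzero bounded selfadjoint operator. Let $c\ge0$, $d>0$, $\delta_\pm:=\pm\sqrt{c-d^2/4}-id/2$ (principal square root), $\mathcal{C}:=\mathbb{C}\setminus\{\delta_+,\delta_-\}$. $W(A),W(B)$ are numerical ranges; for $z\in\mathbb{C}$, $z_\Re,z_\Im$ are real and imaginary parts. For real $\alpha,\beta$ let $t_{(\alpha,\beta)}(\omega):=\alpha-\omega^2-\frac{\omega^2}{c-id\omega-\omega^2}\beta$ and $p_{(\alpha,\beta)}(\omega):=(\alpha-\omega^2)(c-id\omega-\omega^2)-\beta\omega^2$, with roots $r_1,\dots,r_4$ labelled continuously in $(\alpha,\beta)$ and extended by limits to $\overline{\mathbb{R}}\times\mathbb{R}$, values in $\overline{\mathbb{C}}$. $\Omega:=\overline{W(A)}\times\overline{W(B)}$ (closure of $W(A)$ in $\overline{\mathbb{R}}=\mathbb{R}\cup\{\pm\infty\}$), $W_\Omega(T):=\bigcup_n r_n(\Omega)$, and for $\epsilon>0$, $W^\epsilon_\Omega(T):=W_\Omega(T)\cup\{\omega\in\mathcal{C}\setminus W_\Omega(T):\exists(\alpha,\beta)\in\Omega,\ |t_{(\alpha,\beta)}(\omega)|<\epsilon\}$. *)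

From HB Require Import structures.
From mathcomp Require Import all_boot all_order all_algebra.
From mathcomp Require Import all_classical all_reals all_analysis.
From mathcomp Require Import complex.
Set Implicit Arguments. Unset Strict Implicit. Unset Printing Implicit Defensive.
Import Order.TTheory GRing.Theory Num.Theory.
Import numFieldNormedType.Exports.
Local Open Scope classical_set_scope.
Local Open Scope ring_scope.

Section Hilbert.
Variables (R : realType) (H : lmodType R[i]) (ip : H -> H -> R[i]).

Definition hnorm (x : H) : R := Num.sqrt (complex.Re (ip x x)).

Definition is_hilbert : Prop :=
  [/\ (forall (a : R[i]) (x y z : H), ip (a *: x + y) z = a * ip x z + ip y z),
      (forall x y : H, ip y x = conjc (ip x y)),
      (forall x : H, x != 0 -> 0 < complex.Re (ip x x)) &
      (forall u : nat -> H,
         (forall e : R, 0 < e -> exists N : nat, forall m n : nat,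
              (N <= m)%N -> (N <= n)%N -> hnorm (u m - u n) < e) ->
         exists l : H, forall e : R, 0 < e -> exists N : nat, forall n : nat,
              (N <= n)%N -> hnorm (u n - l) < e)].

(* (possibly unbounded) selfadjoint operator A with domain D:
   D a subspace, A linear on D, D dense, and A^* = A, i.e.
   D(A^* ) = D and A^* y = A y, where y \in D(A^* ) with A^* y = z iff
   <A x, y> = <x, z> for all x \in D. *)
Definition selfadjoint (D : set H) (A : H -> H) : Prop :=
  [/\ D 0, (forall (a : R[i]) x y, D x -> D y -> D (a *: x + y)),
      (forall (a : R[i]) x y, D x -> D y -> A (a *: x + y) = a *: A x + A y),
      (forall x (e : R), 0 < e -> exists2 y, D y & hnorm (x - y) < e) &
      (forall y z : H, (forall x, D x -> ip (A x) y = ip x z) <-> (D y /\ z = A y))].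

Definition bounded_selfadjoint (B : H -> H) : Prop :=
  [/\ (forall (a : R[i]) x y, B (a *: x + y) = a *: B x + B y),
      (exists M : R, forall x, hnorm (B x) <= M * hnorm x) &
      (forall x y, ip (B x) y = ip x (B y))].

Definition numrange (D : set H) (A : H -> H) : set R[i] :=
  [set z | exists x, [/\ D x, hnorm x = 1 & z = ip (A x) x]].

Definition numrangeR (D : set H) (A : H -> H) : set R :=
  [set r : R | numrange D A (r%:C)%C].

End Hilbert.

Section Spectral.
Variables (R : realType) (c d : R).
Local Notation C := R[i].

Definition iC : C := Complex 0 1.

Definition psqrt (x : R) : C :=
  if 0 <= x then ((Num.sqrt x)%:C)%C else iC * ((Num.sqrt (- x))%:C)%C.

Definition delta_p : C := psqrt (c - d ^+ 2 / 4) - iC * ((d / 2)%:C)%C.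
Definition delta_m : C := - psqrt (c - d ^+ 2 / 4) - iC * ((d / 2)%:C)%C.

Definition calC : set C := [set w | w <> delta_p /\ w <> delta_m].

Definition denom (w : C) : C := (c%:C)%C - iC * (d%:C)%C * w - w ^+ 2.

Definition tfun (alpha beta : R) (w : C) : C :=
  (alpha%:C)%C - w ^+ 2 - w ^+ 2 / denom w * (beta%:C)%C.

Definition pfun (alpha beta : R) (w : C) : C :=
  ((alpha%:C)%C - w ^+ 2) * denom w - (beta%:C)%C * w ^+ 2.

Variables (WA WB : set R).

(* first component of Omega: closure of W(A) in the extended reals *)
Definition OmegaA : set (\bar R) := closure [set (x%:E)%E | x in WA].
Definition OmegaB : set R := closure WB.

(* W_Omega(T): union of the root curves r_n(Omega).  For finite alpha these
   are the roots of p_{(alpha,beta)}; for alpha = +-oo the limits of the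
   roots are delta_+, delta_- and the point infinity (not in C). *)
Definition WOmega : set C :=
  [set w | exists alpha beta, [/\ OmegaA (alpha%:E)%E, OmegaB beta &
                                  pfun alpha beta w = 0]]
  `|` [set w | (OmegaA +oo%E \/ OmegaA -oo%E) /\ (w = delta_p \/ w = delta_m)].

(* W^eps_Omega(T); for alpha = +-oo, |t_{(alpha,beta)}(omega)| is infinite,
   so only finite alpha can give |t| < eps *)
Definition Weps (eps : R) : set C :=
  WOmega `|` [set w | [/\ calC w, ~ WOmega w &
     exists alpha beta, [/\ OmegaA (alpha%:E)%E, OmegaB beta &
                            `|tfun alpha beta w| < (eps%:C)%C]]].

Section Eps0.
Variable w : C.
Definition kappa : C := w ^+ 2 / denom w.
Definition lambda : C := w ^+ 2.
Definition kR : R := complex.Re kappa.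
Definition kI : R := complex.Im kappa.
Definition lR : R := complex.Re lambda.
Definition lI : R := complex.Im lambda.
Definition kabs2 : R := kR ^+ 2 + kI ^+ 2.

Definition infA : \bar R := ereal_inf [set (x%:E)%E | x in WA].
Definition supA : \bar R := ereal_sup [set (x%:E)%E | x in WA].

(* the targets whose closest points in closure W(B) are beta_inf, beta_sup *)
Definition target (a : \bar R) : \bar R :=
  (- ((kI * lI)%:E - (kR)%:E * (a - lR%:E)) * (kabs2^-1)%:E)%E.

Definition closest (S : set R) (t : \bar R) (b : R) : Prop :=
  S b /\ forall x, S x -> (`|b%:E - t| <= `|x%:E - t|)%E.

(* the interval \mathcal B (endpoints taken in increasing order) *)
Definition Bset : set R :=
  let e1 := ((infA - lR%:E) * (kR^-1)%:E)%E in
  let e2 := ((supA - lR%:E) * (kR^-1)%:E)%E in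
  [set x : R | (Order.min e1 e2 <= x%:E <= Order.max e1 e2)%E].

Definition BW : set R := Bset `&` OmegaB.

Definition term (a : \bar R) (b : R) : \bar R :=
  match a with
  | (x%:E)%E => (Num.sqrt ((b * kI + lI) ^+ 2 + (x - kR * b - lR) ^+ 2))%:E
  | _ => +oo%E
  end.

Definition eps0 (binf bsup bop : R) : \bar R :=
  if kR == 0 then
    (Num.sqrt (inf [set (b * kI + lI) ^+ 2 | b in WB]
               + inf [set (a - lR) ^+ 2 | a in WA]))%:E
  else
    let m := Order.min (term infA binf) (term supA bsup) in
    if pselect (BW = set0) then m
    else Order.min m (term ((bop * kR + lR)%:E)%E bop).

(* the (uniquely determined, resp. arbitrary when kI = 0) choices of
   beta_inf, beta_sup, beta_op made in the definition of eps0 *)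
Definition eps0_choices (binf bsup bop : R) : Prop :=
  kR != 0 ->
  [/\ closest OmegaB (target infA) binf,
      closest OmegaB (target supA) bsup &
      (BW !=set0 -> BW bop /\ (kI != 0 -> closest BW ((- lI / kI)%:E)%E bop))].
End Eps0.
End Spectral.

From HB Require Import structures.
From mathcomp Require Import all_boot all_order all_algebra.
From mathcomp Require Import all_classical all_reals all_analysis.
From mathcomp Require Import complex.
From mathcomp Require Import ring lra.
Set Implicit Arguments. Unset Strict Implicit. Unset Printing Implicit Defensive.
Import Order.TTheory GRing.Theory Num.Theory.
Import numFieldNormedType.Exports.
Local Open Scope classical_set_scope.
Local Open Scope ring_scope.

(* |t_(a,b)(w)|^2 = (b kI + lI)^2 + (a - kR b - lR)^2 with kappa = kR + i kI and
   lambda = lR + i lI, and away from delta_+- the roots of p are exactly the zeros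
   of t, so w lies in W^eps exactly when this residual is below eps^2 somewhere on
   Omega; the claim is that eps0 is the infimum of its square root there.
   Selfadjointness makes W(A) and W(B) nonempty real intervals (restricting the
   quadratic form to the segment between two unit vectors and applying the
   intermediate value theorem), so Omega = [inf W(A), sup W(A)] x closure W(B).
   If kR = 0 the two squares decouple and are minimised separately.  Otherwise,
   for fixed b the best a is kR b + lR when b lies in the interval B, leaving
   (b kI + lI)^2, minimised on B /\ closure W(B) at bop; when it does not, the best
   a is an endpoint of [inf W(A), sup W(A)], and on such an edge the residual is a
   quadratic in b whose vertex is the target, so binf or bsup is optimal. *)

Section RealEmbedding.
Variable R : realType.
Local Open Scope complex_scope.

Lemma conjc_real (r : R) : conjc (r%:C) = r%:C.
Proof. by apply/eqP; rewrite eq_complex /= oppr0 !eqxx. Qed.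

Lemma Re_realM (s : R) (e : R[i]) : complex.Re (s%:C * e) = s * complex.Re e.
Proof. by case: e => e1 e2 /=; simpc; ring. Qed.

Lemma real_Re (e : R[i]) : complex.Im e = 0 -> e = (complex.Re e)%:C.
Proof. by case: e => e1 e2 /= ->. Qed.

End RealEmbedding.

Lemma sqrt_lt_sqr (R : realType) (x eps : R) : 0 < eps ->
  (Num.sqrt x < eps) = (x < eps ^+ 2).
Proof.
by move=> eps_gt0; rewrite -{1}(gtr0_norm eps_gt0) -sqrtr_sqr ltr_sqrt ?exprn_gt0.
Qed.

Lemma sqr_le_of_norm_le (R : realType) (u v : R) : `|u| <= `|v| -> u ^+ 2 <= v ^+ 2.
Proof.
move=> h; rewrite -real_normK ?num_real // -[v ^+ 2]real_normK ?num_real //.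
by rewrite lerXn2r ?nnegrE.
Qed.

Lemma closure_inf (R : realType) (S : set R) :
  S !=set0 -> has_lbound S -> closure S (inf S).
Proof.
move=> S0 lS U /nbhs_ballP[e e0 sub].
have [a Sa ha] := inf_adherent e0 (conj S0 lS).
exists a; split => //; apply: sub.
have := ge_inf lS Sa; rewrite /ball /= => h.
by rewrite distrC ger0_norm ?subr_ge0 //; lra.
Qed.

Lemma closure_lbound (R : realType) (f : R -> R) (S : set R) m x :
  continuous f -> (forall y, S y -> m <= f y) -> closure S x -> m <= f x.
Proof.
move=> cf Sm; suff : closure S `<=` f @^-1` [set z | m <= z] by apply.
rewrite [X in _ `<=` X](closure_id _).1; first exact: closureS.
by apply: preimage_closed => // z _; exact: cf.
Qed.

Lemma inf_image_le_closure (R : realType) (f : R -> R) (S : set R) x :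
  continuous f -> has_lbound (f @` S) -> closure S x -> inf (f @` S) <= f x.
Proof.
move=> cf lS; apply: closure_lbound => // y Sy.
by apply: ge_inf => //; exists y.
Qed.

Lemma continuous_poly_fun (R : realType) (f : R -> R) (p : {poly R}) :
  f =1 horner p -> continuous f.
Proof. by move=> /funext ->; exact: continuous_horner. Qed.

Lemma has_lbound_sqr_image (R : realType) (T : Type) (S : set T) (f : T -> R) :
  has_lbound [set f x ^+ 2 | x in S].
Proof. by exists 0 => _ [x _ <-]; exact: sqr_ge0. Qed.

Section ExtendedAffine.
Variable R : realType.
Local Open Scope ereal_scope.

Lemma ediv_le (X : \bar R) (k l b : R) : (k != 0)%R ->
  ((X - l%:E) * (k^-1)%:E <= b%:E) =
  if (0 < k)%R then X <= (k * b + l)%:E else (k * b + l)%:E <= X.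
Proof.
move=> k0; have [kp|kn] := ltP 0%R k; last have {}kn : (k < 0)%R by rewrite lt_neqAle k0.
all: case: X => [x| |] /=; rewrite ?leey ?leNye ?leye_eq ?leeNy_eq //.
- by rewrite -EFinB -EFinM !lee_fin ler_pdivrMr //; apply/idP/idP => h; lra.
- by rewrite mulyr gtr0_sg ?invr_gt0 // mul1e.
- by rewrite mulNyr gtr0_sg ?invr_gt0 // mul1e leNye.
- by rewrite -EFinB -EFinM !lee_fin ler_ndivrMr //; apply/idP/idP => h; lra.
- by rewrite mulyr ltr0_sg ?invr_lt0 // mulN1e leNye.
- by rewrite mulNyr ltr0_sg ?invr_lt0 // mulN1e.
Qed.

Lemma ediv_ge (X : \bar R) (k l b : R) : (k != 0)%R ->
  (b%:E <= (X - l%:E) * (k^-1)%:E) =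
  if (0 < k)%R then (k * b + l)%:E <= X else X <= (k * b + l)%:E.
Proof.
move=> k0; have [kp|kn] := ltP 0%R k; last have {}kn : (k < 0)%R by rewrite lt_neqAle k0.
all: case: X => [x| |] /=; rewrite ?leey ?leNye ?leye_eq ?leeNy_eq //.
- by rewrite -EFinB -EFinM !lee_fin ler_pdivlMr //; apply/idP/idP => h; lra.
- by rewrite mulyr gtr0_sg ?invr_gt0 // mul1e leey.
- by rewrite mulNyr gtr0_sg ?invr_gt0 // mul1e.
- by rewrite -EFinB -EFinM !lee_fin ler_ndivlMr //; apply/idP/idP => h; lra.
- by rewrite mulyr ltr0_sg ?invr_lt0 // mulN1e.
- by rewrite mulNyr ltr0_sg ?invr_lt0 // mulN1e leey.
Qed.

Lemma le_or_le_itv (x y g : \bar R) : x <= y ->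
  ((x <= g) || (y <= g)) && ((g <= x) || (g <= y)) = (x <= g <= y).
Proof.
move=> xy; apply/idP/idP => [|/andP[-> ->]]; last by rewrite orbT.
case/andP => /orP[xg|yg] /orP[gx|gy]; rewrite ?xg ?gy //=.
- by rewrite (le_trans gx xy).
- by rewrite (le_trans xy yg) (le_trans gx xy).
- by rewrite (le_trans xy yg).
Qed.

End ExtendedAffine.

Section InnerProduct.
Variables (R : realType) (H : lmodType R[i]) (ip : H -> H -> R[i]).
Local Open Scope complex_scope.
Hypotheses (ip_linear : forall a x y z, ip (a *: x + y) z = a * ip x z + ip y z)
  (ip_conj : forall x y, ip y x = conjc (ip x y))
  (ip_pos : forall x, x != 0 -> 0 < complex.Re (ip x x)).

Lemma ipDl x y z : ip (x + y) z = ip x z + ip y z.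
Proof. by have := ip_linear 1 x y z; rewrite scale1r mul1r. Qed.

Lemma ip0l z : ip 0 z = 0.
Proof. by apply: (addrI (ip 0 z)); rewrite -ipDl !addr0. Qed.

Lemma ipZl a x z : ip (a *: x) z = a * ip x z.
Proof. by rewrite -[a *: x]addr0 ip_linear ip0l addr0. Qed.

Lemma ipDr x y z : ip z (x + y) = ip z x + ip z y.
Proof. by rewrite ip_conj ipDl rmorphD /= -!ip_conj. Qed.

Lemma ipZr a x z : ip z (a *: x) = conjc a * ip z x.
Proof. by rewrite ip_conj ipZl rmorphM /= -ip_conj. Qed.

Lemma ip_ge0 x : 0 <= complex.Re (ip x x).
Proof. by have [->|/ip_pos/ltW//] := eqVneq x 0; rewrite ip0l. Qed.

Lemma Re_ip_unit x : hnorm ip x = 1 -> complex.Re (ip x x) = 1.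
Proof. by rewrite /hnorm => h; rewrite -(sqr_sqrtr (ip_ge0 x)) h expr1n. Qed.

Lemma ip_scale_real (r : R) x y : ip (r%:C *: x) (r%:C *: y) = (r ^+ 2)%:C * ip x y.
Proof. by rewrite ipZl ipZr conjc_real mulrA -rmorphM /= expr2. Qed.

Lemma Re_ip_real_comb (s t : R) p q u v :
  complex.Re (ip (s%:C *: p + t%:C *: q) (s%:C *: u + t%:C *: v)) =
  s ^+ 2 * complex.Re (ip p u) + s * t * complex.Re (ip p v + ip q u)
  + t ^+ 2 * complex.Re (ip q v).
Proof.
rewrite ipDl !ipDr !ipZl !ipZr !conjc_real.
move: (ip p u) (ip p v) (ip q u) (ip q v) => [a1 a2] [b1 b2] [c1 c2] [d1 d2] /=.
by simpc; ring.
Qed.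

Lemma dense_nonzero (D : set H) (z : H) : z != 0 ->
  (forall (x : H) (e : R), 0 < e -> exists2 y, D y & hnorm ip (x - y) < e) ->
  exists2 y, D y & y != 0.
Proof.
move=> z0 /(_ z (hnorm ip z)) []; first by rewrite sqrtr_gt0 ip_pos.
by move=> y Dy zy; exists y => //; apply: contraTneq zy => ->; rewrite subr0 ltxx.
Qed.

Section SymmetricOperator.
Variables (D : set H) (A : H -> H).
Hypotheses (D0 : D 0) (D_linear : forall a x y, D x -> D y -> D (a *: x + y))
  (A_linear : forall a x y, D x -> D y -> A (a *: x + y) = a *: A x + A y)
  (A_sym : forall x, D x -> ip (A x) x = ip x (A x)).

Lemma DZ a x : D x -> D (a *: x).
Proof. by move=> Dx; rewrite -[_ *: _]addr0; apply: D_linear. Qed.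

Lemma A0 : A 0 = 0.
Proof.
have := A_linear 1 D0 D0; rewrite !scale1r addr0 => h.
by apply: (addrI (A 0)); rewrite addr0 -h.
Qed.

Lemma AZ a x : D x -> A (a *: x) = a *: A x.
Proof. by move=> Dx; rewrite -[_ *: _]addr0 A_linear // A0 addr0. Qed.

Lemma Im_ip_sym x : D x -> complex.Im (ip (A x) x) = 0.
Proof.
move=> /A_sym; rewrite [ip x _]ip_conj.
case: (ip (A x) x) => e1 e2 /= [] /eqP; rewrite -subr_eq0 opprK -mulr2n.
by rewrite mulrn_eq0 /= => /eqP.
Qed.

Lemma numrangeR_rayleigh z : D z -> z != 0 ->
  numrangeR ip D A (complex.Re (ip (A z) z) / complex.Re (ip z z)).
Proof.
move=> Dz /ip_pos; set N := complex.Re (ip z z) => N0.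
set r := (Num.sqrt N)^-1.
have r2 : r ^+ 2 = N^-1 by rewrite exprVn sqr_sqrtr // ltW.
exists (r%:C *: z); split; first exact: DZ.
  by rewrite /hnorm ip_scale_real Re_realM r2 mulVf ?sqrtr1 // gt_eqF.
by rewrite AZ // ip_scale_real (real_Re (Im_ip_sym Dz)) -rmorphM /= r2 mulrC.
Qed.

Lemma real_comb_neq0 u v (t : R) : D u ->
  complex.Re (ip u u) = 1 -> complex.Re (ip v v) = 1 ->
  complex.Re (ip (A u) u) != complex.Re (ip (A v) v) ->
  (1 - t)%:C *: u + t%:C *: v != 0.
Proof.
move=> Du Nu Nv Quv; apply/eqP => z0.
have [t0|tn0] := eqVneq t 0.
  move: z0 Nu; rewrite t0 subr0 scale0r addr0 scale1r => -> /eqP.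
  by rewrite ip0l eq_sym oner_eq0.
have ev : v = (- ((1 - t) / t))%:C *: u.
  apply: (@scalerI _ _ (t%:C)); first by rewrite eq_complex /= negb_and tn0.
  rewrite scalerA -rmorphM /= mulrN mulrCA mulfV // mulr1 rmorphN scaleNr.
  by apply/eqP; rewrite -addr_eq0 addrC z0.
move: Nv Quv; rewrite ev AZ // !ip_scale_real !Re_realM Nu mulr1 => ->.
by rewrite mul1r eqxx.
Qed.

(* Along z_t = (1 - t) u + t v, the quadratic <A z_t, z_t> - x <z_t, z_t> goes
   from a - x < 0 to b - x > 0, so it vanishes at some z_t, which is nonzero. *)
Lemma numrangeR_convex a b x : numrangeR ip D A a -> numrangeR ip D A b ->
  a < x < b -> numrangeR ip D A x.
Proof.
move=> [u [Du /Re_ip_unit Nu ha]] [v [Dv /Re_ip_unit Nv hb]] /andP[ax xb].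
have Qu : complex.Re (ip (A u) u) = a by rewrite -ha.
have Qv : complex.Re (ip (A v) v) = b by rewrite -hb.
pose z (t : R) := (1 - t)%:C *: u + t%:C *: v.
have Dz t : D (z t) by apply: D_linear => //; exact: DZ.
have Az t : A (z t) = (1 - t)%:C *: A u + t%:C *: A v.
  by rewrite /z A_linear ?AZ //; exact: DZ.
set K := complex.Re (ip (A u) v + ip (A v) u).
set M := complex.Re (ip u v + ip v u).
pose p : {poly R} := (1 - 'X) ^+ 2 * (a - x)%:P
  + (1 - 'X) * 'X * (K - x * M)%:P + 'X ^+ 2 * (b - x)%:P.
have pE t :
    p.[t] = complex.Re (ip (A (z t)) (z t)) - x * complex.Re (ip (z t) (z t)).
  by rewrite Az /z !Re_ip_real_comb Qu Qv Nu Nv -/K -/M /p !hornerE; ring.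
have [t _ pt0] : exists2 t, t \in `[0, 1] & p.[t] = 0.
  apply: IVT; first exact: ler01.
    by apply/continuous_subspaceT => y; exact: continuous_horner.
  rewrite !hornerE /= subrr subr0 expr0n expr1n /=.
  rewrite !(mul0r, mulr0, mul1r, add0r, addr0).
  by rewrite ge_min le_max !subr_le0 !subr_ge0 (ltW ax) (ltW xb) !orbT.
have z0 : z t != 0 by apply: real_comb_neq0; rewrite // Qu Qv lt_eqF // (lt_trans ax).
move: pt0; rewrite pE => /eqP; rewrite subr_eq0 => /eqP xE.
by have := numrangeR_rayleigh (Dz t) z0; rewrite xE mulfK // gt_eqF // ip_pos.
Qed.

End SymmetricOperator.
End InnerProduct.

Section ClosureInExtendedReals.
Variables (R : realType) (S : set R).

Lemma OmegaA_EFin x : OmegaA S x%:E <-> closure S x.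
Proof.
split=> h U.
  move=> nU; have : nbhs x%:E (fun y : \bar R => U (fine y)) by apply/nbhs_EFin.
  by move=> /h [_ [[r Sr <-]]] /= Ur; exists r.
move=> /nbhs_EFin /h [r [Sr Ur]]; exists r%:E; split => //; by exists r.
Qed.

Lemma OmegaA_bounds X : OmegaA S X -> (infA S <= X <= supA S)%E.
Proof.
have closed_sub (P : set (\bar R)) : closed P ->
    [set x%:E | x in S] `<=` P -> OmegaA S `<=` P.
  by move=> cP SP; rewrite (closure_id P).1 //; exact: closureS.
move=> SX; apply/andP; split.
  apply: (closed_sub [set y | infA S <= y]%E) SX; first exact: closed_ereal_le_ereal.
  by move=> _ [r Sr <-]; apply: ereal_inf_lbound; exists r.
apply: (closed_sub [set y | y <= supA S]%E) SX; first exact: closed_ereal_ge_ereal.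
by move=> _ [r Sr <-]; apply: ereal_sup_ubound; exists r.
Qed.

Hypotheses (S0 : S !=set0) (S_convex : forall a b x, S a -> S b -> a < x < b -> S x).

Lemma infA_le_supA : (infA S <= supA S)%E.
Proof.
case: S0 => a Sa; apply: (@le_trans _ _ a%:E).
  by apply: ereal_inf_lbound; exists a.
by apply: ereal_sup_ubound; exists a.
Qed.

Lemma OmegaA_EFinE x : OmegaA S x%:E <-> (infA S <= x%:E <= supA S)%E.
Proof.
split; first exact: OmegaA_bounds.
move=> /andP[h1 h2]; apply/OmegaA_EFin.
have [e1|l1] := eqVneq (infA S) x%:E.
  have lS : has_lbound S.
    by exists x => y Sy; rewrite -lee_fin -e1; apply: ereal_inf_lbound; exists y.
  by move: e1; rewrite /infA ereal_inf_EFin // => -[<-]; exact: closure_inf.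
have [e2|l2] := eqVneq (supA S) x%:E.
  have uS : has_ubound S.
    by exists x => y Sy; rewrite -lee_fin -e2; apply: ereal_sup_ubound; exists y.
  by move: e2; rewrite /supA ereal_sup_EFin // => -[<-]; exact: closure_sup.
have [_ [a Sa <-] ax] : exists2 y, [set x%:E | x in S] y & (y < x%:E)%E.
  by apply: ereal_inf_lt; rewrite lt_neqAle l1.
have [_ [b Sb <-] xb] : exists2 y, [set x%:E | x in S] y & (x%:E < y)%E.
  by apply: ereal_sup_gt; rewrite lt_neqAle eq_sym l2.
by apply/subset_closure/(S_convex Sa Sb); rewrite -!lte_fin ax xb.
Qed.

End ClosureInExtendedReals.

Section Residual.
Variables (R : realType) (c d : R) (w : R[i]).
Local Notation kR := (kR c d w).
Local Notation kI := (kI c d w).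
Local Notation lR := (lR w).
Local Notation lI := (lI w).

Definition residual2 (a b : R) : R := (b * kI + lI) ^+ 2 + (a - kR * b - lR) ^+ 2.

Lemma residual2_ge0 a b : 0 <= residual2 a b.
Proof. by rewrite addr_ge0 ?sqr_ge0. Qed.

Lemma normc_tfun a b : `|tfun c d a b w| = (Num.sqrt (residual2 a b))%:C%C.
Proof.
rewrite normc_def /tfun /residual2 addrC /kR /kI /lR /lI /kappa /lambda.
move: (w ^+ 2) (w ^+ 2 / denom c d w) => [l1 l2] [k1 k2] /=.
by congr (Num.sqrt _)%:C%C; simpc; ring.
Qed.

Lemma denom_factor :
  denom c d w = - ((w - delta_p c d) * (w - delta_m c d)).
Proof.
have iC2 : iC R * iC R = -1 by apply/eqP; rewrite eq_complex /=; simpc.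
have psqrt2 (x : R) : psqrt x * psqrt x = x%:C%C.
  rewrite /psqrt; case: ifP => x0; first by rewrite -rmorphM /= -expr2 sqr_sqrtr.
  have xn : 0 <= - x by rewrite oppr_ge0 ltW // ltNge x0.
  by rewrite mulrACA iC2 -rmorphM /= -expr2 sqr_sqrtr // mulN1r -rmorphN opprK.
rewrite /denom /delta_p /delta_m.
move: (psqrt2 (c - d ^+ 2 / 4)); move: (psqrt _) => s hs.
have -> : c%:C%C = s * s + (d / 2)%:C%C * (d / 2)%:C%C.
  by rewrite hs -rmorphM -rmorphD /=; congr (_%:C%C); field.
have -> : d%:C%C = (d / 2)%:C%C + (d / 2)%:C%C by rewrite -rmorphD /= -splitr.
move: ((d / 2)%:C%C) => h; apply/eqP; rewrite -subr_eq0.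
have -> : s * s + h * h - iC R * (h + h) * w - w ^+ 2
    - - ((w - (s - iC R * h)) * (w - (- s - iC R * h))) = (iC R * iC R + 1) * (h * h).
  by ring.
by rewrite iC2 addNr mul0r.
Qed.

Hypothesis w_calC : calC c d w.

Lemma denom_neq0 : denom c d w != 0.
Proof.
case: w_calC => hp hm; rewrite denom_factor oppr_eq0 mulf_eq0 !subr_eq0.
by apply/norP; split; apply/eqP.
Qed.

Lemma tfun_eq0 a b : pfun c d a b w = 0 -> tfun c d a b w = 0.
Proof.
have -> : tfun c d a b w = pfun c d a b w / denom c d w.
  by rewrite /tfun /pfun; field; exact: denom_neq0.
by move=> ->; rewrite mul0r.
Qed.

Variables (WA WB : set R).

Definition Omega_residual_lt (eps : R) : Prop := exists a b,
  [/\ OmegaA WA a%:E, OmegaB WB b & Num.sqrt (residual2 a b) < eps].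

Lemma WepsE eps : 0 < eps -> Weps c d WA WB eps w <-> Omega_residual_lt eps.
Proof.
move=> eps_gt0; have [hp hm] := w_calC; split.
  case=> [[[a [b [OA OB /tfun_eq0 t0]]]|[_ [//|//]]]|[_ _ [a [b [OA OB]]]]].
    exists a, b; split => //.
    by rewrite -ltcR -normc_tfun t0 normr0 -[0]/(0%:C%C) ltcR.
  by rewrite normc_tfun ltcR => lt; exists a, b.
move=> [a [b [OA OB lt]]].
have [|nW] := pselect (WOmega c d WA WB w); first by left.
by right; split => //; exists a, b; split => //; rewrite normc_tfun ltcR.
Qed.

End Residual.

Section KappaImaginary.
Variables (R : realType) (c d : R) (w : R[i]) (WA WB : set R).
Local Notation kI := (kI c d w).
Local Notation lR := (lR w).
Local Notation lI := (lI w).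
Local Notation residual2 := (residual2 c d w).
Hypothesis kR0 : kR c d w = 0.

Let SB := [set (b * kI + lI) ^+ 2 | b in WB].
Let SA := [set (a - lR) ^+ 2 | a in WA].

Lemma residual2_kR0 a b : residual2 a b = (b * kI + lI) ^+ 2 + (a - lR) ^+ 2.
Proof. by rewrite /residual2 kR0 mul0r subr0. Qed.

Lemma inf_le_residual2 a b : OmegaA WA a%:E -> OmegaB WB b ->
  inf SB + inf SA <= residual2 a b.
Proof.
move=> /OmegaA_EFin OA OB; rewrite residual2_kR0; apply: lerD.
  apply: (inf_image_le_closure (f := fun y => (y * kI + lI) ^+ 2)) OB.
    apply: (continuous_poly_fun (p := ('X * kI%:P + lI%:P) ^+ 2)) => y.
    by rewrite !hornerE.
  exact: has_lbound_sqr_image.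
apply: (inf_image_le_closure (f := fun y => (y - lR) ^+ 2)) OA.
  by apply: (continuous_poly_fun (p := ('X - lR%:P) ^+ 2)) => y; rewrite !hornerE.
exact: has_lbound_sqr_image.
Qed.

Hypotheses (WA0 : WA !=set0) (WB0 : WB !=set0).

Lemma Omega_residual_lt_of_inf eps : 0 < eps -> inf SB + inf SA < eps ^+ 2 ->
  Omega_residual_lt c d w WA WB eps.
Proof.
move=> eps_gt0 lt; pose del := (eps ^+ 2 - (inf SB + inf SA)) / 2.
have del0 : 0 < del by rewrite divr_gt0 // subr_gt0.
have [_ [b Wb <-] hb] := inf_adherent del0
  (conj (image_nonempty _ WB0) (has_lbound_sqr_image WB (fun b => b * kI + lI))).
have [_ [a Wa <-] ha] := inf_adherent del0
  (conj (image_nonempty _ WA0) (has_lbound_sqr_image WA (fun a => a - lR))).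
exists a, b; split; [exact/OmegaA_EFin/subset_closure | exact: subset_closure |].
by rewrite sqrt_lt_sqr // residual2_kR0; rewrite /del in ha hb; lra.
Qed.

Lemma Omega_residual_ltE_kR0 eps binf bsup bop : 0 < eps ->
  Omega_residual_lt c d w WA WB eps <-> (eps0 c d WA WB w binf bsup bop < eps%:E)%E.
Proof.
move=> eps_gt0; rewrite /eps0 kR0 eqxx lte_fin; split=> [[a [b [OA OB]]]|].
  by apply: le_lt_trans; rewrite ler_sqrt ?residual2_ge0 ?inf_le_residual2.
by rewrite sqrt_lt_sqr //; exact: Omega_residual_lt_of_inf.
Qed.

End KappaImaginary.

Section KappaNotImaginary.
Variables (R : realType) (c d : R) (w : R[i]) (WA WB : set R).
Local Notation kR := (kR c d w).
Local Notation kI := (kI c d w).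
Local Notation lR := (lR w).
Local Notation lI := (lI w).
Local Notation kabs2 := (kabs2 c d w).
Local Notation residual2 := (residual2 c d w).
Local Notation term := (term c d w).
Local Notation BW := (BW c d WA WB w).
Hypothesis kR0 : kR != 0.

Lemma kabs2_neq0 : kabs2 != 0.
Proof. by rewrite paddr_eq0 ?sqr_ge0 // negb_and sqrf_eq0 kR0. Qed.

(* Completing the square in b: the vertex is [target (x%:E)]. *)
Lemma residual2_sub x b1 b2 : residual2 x b2 - residual2 x b1 =
  kabs2 * ((b2 - (- (kI * lI - kR * (x - lR))) / kabs2) ^+ 2
         - (b1 - (- (kI * lI - kR * (x - lR))) / kabs2) ^+ 2).
Proof. by have := kabs2_neq0; rewrite /residual2 /kabs2 => k0; field. Qed.

Lemma residual2_closest (S : set R) x b' b : closest S (target c d w x%:E) b' -> S b ->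
  residual2 x b' <= residual2 x b.
Proof.
move=> [_ cl] /cl; rewrite -!EFinB !abse_EFin lee_fin => /sqr_le_of_norm_le le.
rewrite -subr_ge0 residual2_sub mulr_ge0 ?subr_ge0 //.
by rewrite addr_ge0 ?sqr_ge0.
Qed.

Lemma term_le_residual2 x b' a b : closest (OmegaB WB) (target c d w x%:E) b' ->
  OmegaB WB b -> `|x - kR * b - lR| <= `|a - kR * b - lR| ->
  (term x%:E b' <= (Num.sqrt (residual2 a b))%:E)%E.
Proof.
move=> cl OB /sqr_le_of_norm_le le; rewrite lee_fin ler_sqrt ?residual2_ge0 //.
by apply: (le_trans (residual2_closest cl OB)); rewrite lerD2l.
Qed.

Hypothesis WA0 : WA !=set0.

Lemma BsetE b : Bset c d WA w b <-> (infA WA <= (kR * b + lR)%:E <= supA WA)%E.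
Proof.
rewrite /Bset /= ge_min le_max !ediv_le // !ediv_ge //.
by case: ifP => _; [|rewrite andbC]; rewrite le_or_le_itv // infA_le_supA.
Qed.

Variables (binf bsup bop : R).
Local Notation eps0 := (eps0 c d WA WB w binf bsup bop).
Hypotheses (WA_convex : forall a b x, WA a -> WA b -> a < x < b -> WA x)
  (binfP : closest (OmegaB WB) (target c d w (infA WA)) binf)
  (bsupP : closest (OmegaB WB) (target c d w (supA WA)) bsup)
  (bopP : BW !=set0 -> BW bop /\ (kI != 0 -> closest BW (- lI / kI)%:E bop)).

Let m12 := Order.min (term (infA WA) binf) (term (supA WA) bsup).
Let m3 := term (bop * kR + lR)%:E bop.

Lemma eps0_BW_eq0 : BW = set0 -> eps0 = m12.
Proof. by move=> BW0; rewrite /eps0 (negbTE kR0); destruct pselect. Qed.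

Lemma eps0_BW_neq0 : BW <> set0 -> eps0 = Order.min m12 m3.
Proof. by move=> BWn0; rewrite /eps0 (negbTE kR0); destruct pselect. Qed.

Lemma eps0_le_min12 : (eps0 <= m12)%E.
Proof.
have [/eps0_BW_eq0 ->|/eps0_BW_neq0 ->] := pselect (BW = set0) => //.
by rewrite ge_min lexx.
Qed.

Lemma eps0_le_op a b : BW b -> (eps0 <= (Num.sqrt (residual2 a b))%:E)%E.
Proof.
move=> BWb; have BWn : BW !=set0 by exists b.
have [_ bop_closest] := bopP BWn.
rewrite eps0_BW_neq0; last by move=> BW0; move: BWb; rewrite BW0.
rewrite ge_min; apply/orP; right; rewrite /m3 /= lee_fin ler_sqrt ?residual2_ge0 //.
rewrite (_ : bop * kR + lR - kR * bop - lR = 0); last by ring.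
apply: (@le_trans _ _ ((b * kI + lI) ^+ 2)); last by rewrite lerDl sqr_ge0.
rewrite expr0n addr0; have [->|kI0] := eqVneq kI 0; first by rewrite !mulr0.
have := (bop_closest kI0).2 b BWb; rewrite -!EFinB !abse_EFin lee_fin.
have affE y : y * kI + lI = kI * (y - (- lI / kI)) by field.
move=> /sqr_le_of_norm_le le; rewrite !affE !exprMn.
by apply: ler_wpM2l; first exact: sqr_ge0.
Qed.

(* If kR b + lR lies outside [infA, supA], moving a to the nearer endpoint
   shrinks the second square, and on that edge binf (resp. bsup) is optimal. *)
Lemma eps0_le_residual2 a b : OmegaA WA a%:E -> OmegaB WB b ->
  (eps0 <= (Num.sqrt (residual2 a b))%:E)%E.
Proof.
move=> OA OB; have [Bb|] := pselect (Bset c d WA w b); first exact: eps0_le_op.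
move: OA => /OmegaA_bounds /andP[infa asup].
rewrite BsetE => /negP; rewrite negb_and -!ltNge => outside.
apply: le_trans eps0_le_min12 _; rewrite /m12 ge_min.
case/orP: outside => [lt_inf|gt_sup]; apply/orP.
- left; move: binfP infa lt_inf; case: (infA WA) => [x| |] // cl.
  rewrite !lte_fin !lee_fin => xa bx; apply: term_le_residual2 cl OB _.
  by rewrite !ger0_norm ?subr_ge0; lra.
- right; move: bsupP asup gt_sup; case: (supA WA) => [x| |] // cl.
  rewrite !lte_fin !lee_fin => ax xb; apply: term_le_residual2 cl OB _.
  by rewrite !ler0_norm ?subr_le0; lra.
Qed.

Lemma Omega_residual_lt_of_term X b eps : (infA WA <= X <= supA WA)%E ->
  OmegaB WB b -> (term X b < eps%:E)%E -> Omega_residual_lt c d w WA WB eps.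
Proof.
case: X => [x hX OB|//|_ _]; last by rewrite ltNge leey.
rewrite lte_fin => lt.
by exists x, b; split => //; exact/OmegaA_EFinE.
Qed.

Lemma Omega_residual_ltE_kR_neq0 eps :
  Omega_residual_lt c d w WA WB eps <-> (eps0 < eps%:E)%E.
Proof.
split=> [[a [b [OA OB lt]]]|].
  by apply: le_lt_trans (eps0_le_residual2 OA OB) _; rewrite lte_fin.
have iAs := infA_le_supA WA0.
have inf_lt : (term (infA WA) binf < eps%:E)%E -> Omega_residual_lt c d w WA WB eps.
  by apply: Omega_residual_lt_of_term binfP.1; rewrite lexx iAs.
have sup_lt : (term (supA WA) bsup < eps%:E)%E -> Omega_residual_lt c d w WA WB eps.
  by apply: Omega_residual_lt_of_term bsupP.1; rewrite lexx iAs.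
have [/eps0_BW_eq0 ->|BWn] := pselect (BW = set0); rewrite ?eps0_BW_neq0 // /m12 !gt_min.
  by case/orP.
have BWne : BW !=set0 by apply/set0P/eqP.
have [[Bbop OBbop] _] := bopP BWne.
case/orP => [/orP[//|//]|]; apply: Omega_residual_lt_of_term OBbop.
by rewrite mulrC; exact/BsetE.
Qed.

End KappaNotImaginary.

Theorem proposition4p5 (R : realType) (H : lmodType R[i]) (ip : H -> H -> R[i])
  (D : set H) (A : H -> H) (B : H -> H) (c d : R)
  (hH : is_hilbert ip) (hA : selfadjoint ip D A)
  (hB : bounded_selfadjoint ip B) (hB0 : exists x, B x != 0)
  (hc : 0 <= c) (hd : 0 < d)
  (w : R[i]) (hw : calC c d w) (eps : R) (heps : 0 < eps)
  (binf bsup bop : R)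
  (hch : eps0_choices c d (numrangeR ip D A) (numrangeR ip (fun _ => True) B)
           w binf bsup bop) :
  Weps c d (numrangeR ip D A) (numrangeR ip (fun _ => True) B) eps w <->
  (eps0 c d (numrangeR ip D A) (numrangeR ip (fun _ => True) B) w
     binf bsup bop < eps%:E)%E.
Proof.
case: hH => ip_linear ip_conj ip_pos _.
case: hA => D0 D_linear A_linear D_dense A_adjoint.
have A_sym x : D x -> ip (A x) x = ip x (A x).
  by move=> Dx; exact: (A_adjoint x (A x)).2 (conj Dx erefl) x Dx.
case: hB => B_linear _ B_sym; have [x0 Bx0] := hB0.
have B_lin a x y : True -> True -> B (a *: x + y) = a *: B x + B y.
  by move=> _ _; exact: B_linear.
have x0_neq0 : x0 != 0 by apply: contraNneq Bx0 => ->; rewrite (A0 I B_lin).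
have WB0 : numrangeR ip (fun _ => True) B !=set0.
  by eexists; exact: (numrangeR_rayleigh ip_linear ip_conj ip_pos I
    (fun _ _ _ _ _ => I) B_lin (fun x _ => B_sym x x) I x0_neq0).
have [y Dy y_neq0] := dense_nonzero ip_pos x0_neq0 D_dense.
have WA0 : numrangeR ip D A !=set0.
  by eexists; exact: (numrangeR_rayleigh ip_linear ip_conj ip_pos
    D0 D_linear A_linear A_sym Dy).
rewrite WepsE //; have [kR0|kR0] := eqVneq (kR c d w) 0.
  exact: Omega_residual_ltE_kR0.
case: (hch kR0) => binfP bsupP bopP.
apply: Omega_residual_ltE_kR_neq0 => //.
exact: (@numrangeR_convex _ _ _ ip_linear ip_conj ip_pos _ _
  D0 D_linear A_linear A_sym).
Qed.
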